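(* Let $n$ be even and $p=n/2$. (1) If $\mathcal{A}\subseteq\mathcal{K}^n_{p-1}$ is a set of $(p-1)$-faces with $|\mathcal{A}|\le n/32$, then $|\partial^+\mathcal{A}|\ge|\mathcal{A}|\cdot(n/2+1)\cdot(15/16)$. (2) If $\mathcal{A}\subseteq\mathcal{K}^n_{p+1}$ is a set of $(p+1)$-faces with $|\mathcal{A}|\le n/8$, then $|\partial^-\mathcal{A}|\ge 2\cdot|\mathcal{A}|\cdot(n/2+1)\cdot(15/16)$.
   Context: An $r$-face of the $n$-dimensional binary cube is a word in $\{0,1,*\}^n$ with exactly $r$ entries equal to $*$; $\mathcal{K}^n_r$ is the set of all $r$-faces. The upper shadow $\partial^+$ of an $r$-face is the set of $(r+1)$-faces obtained by replacing one non-$*$ entry by $*$; the lower shadow $\partial^-$ of an $r$-face is the set of $(r-1)$-faces obtained by replacing one $*$ entry by $0$ or by $1$. For a set $\mathcal{A}$ of faces, $\partial^\pm\mathcal{A}$ is the union of the shadows of its elements. *)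

From mathcomp Require Import all_boot all_order all_algebra.
Set Implicit Arguments. Unset Strict Implicit. Unset Printing Implicit Defensive.

(* A word in {0,1,*}^n: None = *, Some false = 0, Some true = 1. *)
Definition word (n : nat) := {ffun 'I_n -> option bool}.

Definition nstars n (w : word n) : nat := #|[set i | w i == None]|.

Definition faces n (r : nat) : {set word n} := [set w | nstars w == r].

Definition setw n (w : word n) (i : 'I_n) (c : option bool) : word n :=
  [ffun j => if j == i then c else w j].

Definition ushadow1 n (w : word n) : {set word n} :=
  [set setw w i None | i in [set i | w i != None]].

Definition lshadow1 n (w : word n) : {set word n} :=
  [set setw w i (Some b) | i in [set i | w i == None], b in [set: bool]].

Definition ushadow n (A : {set word n}) : {set word n} :=
  \bigcup_(w in A) ushadow1 w.
Definition lshadow n (A : {set word n}) : {set word n} :=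
  \bigcup_(w in A) lshadow1 w.

From mathcomp Require Import all_boot all_order all_algebra.
From mathcomp Require Import zify lra.
Import GRing.Theory Num.Theory.

Set Implicit Arguments.
Unset Strict Implicit.
Unset Printing Implicit Defensive.

(* Two distinct faces share at most one face in their upper shadows (their
   coordinatewise meet) and at most one in their lower shadows (their join).
   So if the k faces of A each have d shadow elements, Bonferroni gives
   |shadow A| >= k d - k(k-1)/2, which is at least (15/16) k d as soon as
   8(k-1) <= d; here d = n/2 + 1 for the upper and n + 2 for the lower
   shadow of the faces next to the middle layer. *)

Lemma card_bigcup_seq_le (I U : finType) (s : seq I) (F : I -> {set U}) :
  #|\bigcup_(i <- s) F i| <= \sum_(i <- s) #|F i|.
Proof.
apply: (big_ind2 (fun (B : {set U}) m => #|B| <= m)) => //; first by rewrite cards0.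
by move=> B1 m1 B2 m2 le1 le2; rewrite (leq_trans (leq_card_setU _ _)) ?leq_add.
Qed.

Section AlmostDisjointUnion.

Variables (T U : finType) (S : T -> {set U}).

Lemma sum_card_le_bigcup_bin2 (s : seq T) : uniq s ->
  {in s &, forall x y, x != y -> #|S x :&: S y| <= 1} ->
  \sum_(x <- s) #|S x| <= #|\bigcup_(x <- s) S x| + 'C(size s, 2).
Proof.
elim: s => [|x s IHs] /=; first by rewrite !big_nil cards0.
case/andP=> xNs uniq_s meet_le1.
have meet_le1_s : {in s &, forall y z, y != z -> #|S y :&: S z| <= 1}.
  by move=> y z ys zs; apply: meet_le1; rewrite inE ?ys ?zs orbT.
have meet_tail : #|S x :&: \bigcup_(y <- s) S y| <= size s.
  rewrite (big_endo (setI (S x)) (@setIUr _ _) (setI0 _)).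
  rewrite (leq_trans (card_bigcup_seq_le _ _)) // -sum1_size !big_seq.
  apply: leq_sum => y ys; apply: meet_le1; rewrite ?inE ?eqxx ?ys ?orbT //.
  by apply: contraNneq xNs => ->.
have := cardsUI (S x) (\bigcup_(y <- s) S y).
have := IHs uniq_s meet_le1_s.
rewrite !big_cons binS bin1; lia.
Qed.

Lemma card_bigcup_almost_disjoint (A : {set T}) (d : nat) :
  {in A, forall x, #|S x| = d} ->
  {in A &, forall x y, x != y -> #|S x :&: S y| <= 1} ->
  8 * #|A|.-1 <= d ->
  15 * (#|A| * d) <= 16 * #|\bigcup_(x in A) S x|.
Proof.
move=> card_S meet_le1 small_A.
have meet_le1_enum : {in enum A &, forall x y, x != y -> #|S x :&: S y| <= 1}.
  by move=> x y; rewrite !mem_enum; exact: meet_le1.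
have := sum_card_le_bigcup_bin2 (enum_uniq A) meet_le1_enum.
rewrite !big_enum /= -cardE (eq_bigr _ card_S) sum_nat_const => union_bound.
have := mul_bin_diag #|A| 1; rewrite bin1 => bin2_double.
have : #|A| * (8 * #|A|.-1) <= #|A| * d by rewrite leq_mul2l small_A orbT.
lia.
Qed.

End AlmostDisjointUnion.

Section Shadows.

Variable n : nat.
Implicit Types (w u : word n) (A : {set word n}).

Lemma setwE w i c j : setw w i c j = if j == i then c else w j.
Proof. by rewrite ffunE. Qed.

Lemma setw_eq_word w w' i c : w i = w' i -> setw w i c = setw w' i c -> w = w'.
Proof.
move=> eq_i /ffunP eq_set; apply/ffunP => j.
by case: (eqVneq j i) => [->//|ji]; move: (eq_set j); rewrite !setwE (negPf ji).
Qed.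

Lemma card_ushadow1 w : #|ushadow1 w| = n - nstars w.
Proof.
rewrite card_in_imset; last first.
  move=> i j; rewrite !inE => wi _ /ffunP/(_ i); rewrite !setwE eqxx.
  by case: eqVneq => // _ wi0; rewrite -wi0 eqxx in wi.
have -> : [set i | w i != None] = ~: [set i | w i == None].
  by apply/setP => i; rewrite !inE.
by rewrite cardsCs setCK card_ord.
Qed.

Lemma card_lshadow1 w : #|lshadow1 w| = (2 * nstars w)%N.
Proof.
rewrite /lshadow1 curry_imset2X card_in_imset ?cardsX ?cardsT ?card_bool 1?mulnC //.
move=> [i b] [j c]; rewrite !inE /= => /andP[/eqP wi _] _ /ffunP/(_ i).
rewrite !setwE eqxx; case: eqVneq => [-> [->] //|_ wj].
by rewrite -wj in wi.
Qed.

Lemma ushadow1_common w w' u : w != w' ->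
  u \in ushadow1 w -> u \in ushadow1 w' ->
  u = [ffun t => if w t == w' t then w t else None].
Proof.
move=> neq_ww' /imsetP[i]; rewrite inE => wi ->{u} /imsetP[j]; rewrite inE => _.
move=> /[dup] eq_u /ffunP eq_uP; apply/ffunP => t; rewrite setwE ffunE.
have [->|ti] := eqVneq t i; last first.
  have := eq_uP t; rewrite !setwE (negPf ti).
  by case: (t == j) => ->; [case: ifP | rewrite eqxx].
case: eqVneq => // eq_i; case/negP: neq_ww'; apply/eqP.
have [ji|ij] := eqVneq i j.
  by apply: (setw_eq_word (c := None) eq_i); rewrite eq_u ji.
have := eq_uP i; rewrite !setwE eqxx (negPf ij) => w'i.
by rewrite eq_i -w'i eqxx in wi.
Qed.

Lemma lshadow1_common w w' u : w != w' ->
  u \in lshadow1 w -> u \in lshadow1 w' ->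
  u = [ffun t => if w t is None then w' t else w t].
Proof.
move=> neq_ww' /imset2P[i b]; rewrite inE => /eqP wi _ ->{u}.
case/imset2P=> j c; rewrite inE => /eqP w'j _.
move=> /[dup] eq_u /ffunP eq_uP; apply/ffunP => t; rewrite setwE ffunE.
have [->|ti] := eqVneq t i; last first.
  case wt: (w t) => [x|] //; have := eq_uP t; rewrite !setwE (negPf ti) wt.
  by case: (t == j).
rewrite wi; have [ij|ij] := eqVneq i j.
  case/negP: neq_ww'; apply/eqP; subst j.
  have := eq_uP i; rewrite !setwE eqxx => -[eq_bc].
  apply: (setw_eq_word (i := i) (c := Some b)); first by rewrite wi w'j.
  by rewrite eq_u eq_bc.
by have := eq_uP i; rewrite !setwE eqxx (negPf ij).
Qed.

Lemma card_ushadow1_meet_le1 w w' : w != w' -> #|ushadow1 w :&: ushadow1 w'| <= 1.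
Proof.
move=> neq_ww'; apply/card_le1_eqP => u v.
rewrite !inE => /andP[uw uw'] /andP[vw vw'].
by rewrite (ushadow1_common neq_ww' uw uw') (ushadow1_common neq_ww' vw vw').
Qed.

Lemma card_lshadow1_meet_le1 w w' : w != w' -> #|lshadow1 w :&: lshadow1 w'| <= 1.
Proof.
move=> neq_ww'; apply/card_le1_eqP => u v.
rewrite !inE => /andP[uw uw'] /andP[vw vw'].
by rewrite (lshadow1_common neq_ww' uw uw') (lshadow1_common neq_ww' vw vw').
Qed.

Lemma card_ushadow_faces r A : A \subset faces n r ->
  8 * #|A|.-1 <= n - r -> 15 * (#|A| * (n - r)) <= 16 * #|ushadow A|.
Proof.
move=> sAF small_A; apply: card_bigcup_almost_disjoint => // [w|w w' _ _].
  by move/(subsetP sAF); rewrite inE card_ushadow1 => /eqP->.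
exact: card_ushadow1_meet_le1.
Qed.

Lemma card_lshadow_faces r A : A \subset faces n r ->
  8 * #|A|.-1 <= 2 * r -> 15 * (#|A| * (2 * r)) <= 16 * #|lshadow A|.
Proof.
move=> sAF small_A; apply: card_bigcup_almost_disjoint => // [w|w w' _ _].
  by move/(subsetP sAF); rewrite inE card_lshadow1 => /eqP->.
exact: card_lshadow1_meet_le1.
Qed.

End Shadows.

Local Open Scope ring_scope.

Theorem mainTheorem3 (n : nat) (Hn : ~~ odd n) :
  let p := n./2 in
  (forall A : {set word n}, A \subset faces n p.-1 ->
     (#|A|%:Q <= n%:Q / 32) ->
     #|ushadow A|%:Q >= #|A|%:Q * (n%:Q / 2 + 1) * (15 / 16)) /\
  (forall A : {set word n}, A \subset faces n p.+1 ->
     (#|A|%:Q <= n%:Q / 8) ->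
     #|lshadow A|%:Q >= 2 * #|A|%:Q * (n%:Q / 2 + 1) * (15 / 16)).
Proof.
move=> p; have n_eq : n = p.*2 by rewrite -[n in LHS]odd_double_half (negPf Hn).
split=> A sAF small_A.
- have {}small_A : (32 * #|A| <= n)%N by rewrite -(ler_nat rat) natrM; lra.
  suff : (15 * (#|A| * (n + 2)) <= 32 * #|ushadow A|)%N.
    by rewrite -(ler_nat rat) !natrM natrD; lra.
  have le_deg : (8 * #|A|.-1 <= n - p.-1)%N by lia.
  have := card_ushadow_faces sAF le_deg.
  (* [p.-1] truncates at [p = 0], but then [A] is empty. *)
  have -> : (#|A| * (n - p.-1) = #|A| * p.+1)%N.
    by case: (posnP #|A|) => [-> //|A_gt0]; congr (_ * _); lia.
  lia.
- have {}small_A : (8 * #|A| <= n)%N by rewrite -(ler_nat rat) natrM; lra.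
  suff : (15 * (#|A| * (n + 2)) <= 16 * #|lshadow A|)%N.
    by rewrite -(ler_nat rat) !natrM natrD; lra.
  have le_deg : (8 * #|A|.-1 <= 2 * p.+1)%N by lia.
  have := card_lshadow_faces sAF le_deg; lia.
Qed.
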